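(* Assume the Cartan matrix $\mathbf C$ is symmetric, and let $i\in I'$. Then we can write $\Lambda_0-\delta+\alpha_i=w(i)\Lambda_0$ for a unique $\Lambda_0$-minuscule element $w(i)\in W$.
   Context: $\mathbf C=(c_{ij})_{i,j\in I}$ is a Cartan matrix of untwisted affine type, $I=\{0,1,\dots,l\}$, $0$ the affine vertex, $I'=I\setminus\{0\}$; $(\mathfrak h,\Pi,\Pi^\vee)$ a realization with simple roots $\alpha_i$, coroots $\alpha_i^\vee$, pairing $\langle\cdot,\cdot\rangle$, $\delta$ the null root. $\Lambda_i$ ($i\in I$) are the fundamental weights, $\langle\Lambda_i,\alpha_j^\vee\rangle=\delta_{ij}$, and $P=\bigoplus\mathbb Z\Lambda_i$. $W$ is the affine Weyl group generated by $r_i$, acting by $r_i(\lambda)=\lambda-\langle\lambda,\alpha_i^\vee\rangle\alpha_i$. For $\Lambda\in P$, $w\in W$ is $\Lambda$-minuscule if it has a reduced expression $w=r_{i_l}\cdots r_{i_1}$ with $\langle r_{i_{k-1}}\cdots r_{i_1}\Lambda,\alpha_{i_k}^\vee\rangle=1$ for all $1\le k\le l$. *)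

From HB Require Import structures.
From mathcomp Require Import all_boot all_order all_algebra.
Set Implicit Arguments. Unset Strict Implicit. Unset Printing Implicit Defensive.
Import Order.TTheory GRing.Theory Num.Theory.
Local Open Scope ring_scope.

(* Index set I = 'I_n (n = l+1), the affine vertex is ord0 : 'I_(l.+1). *)

(** Generalized Cartan matrix (Kac, §1.1). Convention c_ij = <alpha_j, alpha_i^vee>. *)
Definition is_GCM n (C : 'M[int]_n) : Prop :=
  [/\ forall i, C i i = 2,
      forall i j, i != j -> C i j <= 0 &
      forall i j, (C i j == 0) = (C j i == 0)].

Definition indecomposable n (C : 'M[int]_n) : Prop :=
  forall J : {set 'I_n}, J != set0 -> J != setT ->
    exists j, exists k, [/\ j \in J, k \notin J & C j k != 0].

Definition ratmx m n (C : 'M[int]_(m, n)) : 'M[rat]_(m, n) :=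
  map_mx (fun z : int => z%:~R) C.

(** Affine type, Kac's definition (Aff) (Thm 4.3), for an indecomposable GCM. *)
Definition affine_type n (C : 'M[int]_n) : Prop :=
  [/\ is_GCM C, indecomposable C,
      \rank (ratmx C) = n.-1,
      (exists u : 'cV[rat]_n, (forall i, 0 < u i 0) /\ ratmx C *m u = 0) &
      (forall v : 'cV[rat]_n, (forall i, 0 <= (ratmx C *m v) i 0) ->
          ratmx C *m v = 0)].

(** The standard realization: h has basis {alpha_i^vee (i in I), d}; an
    (integral) element of h^* is recorded by its pairings with this basis:
    lambda = ((<lambda, alpha_i^vee>)_i, <lambda, d>). *)
Definition weight n : Type := ({ffun 'I_n -> int} * int)%type.

Definition pair_cor n (lam : weight n) (j : 'I_n) : int := lam.1 j.

Definition alpha l (C : 'M[int]_l.+1) (j : 'I_l.+1) : weight l.+1 :=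
  ([ffun k => C k j], (j == ord0)%:R).

Definition Lambda n (i : 'I_n) : weight n := ([ffun k => (k == i)%:R], 0).

(* null root delta = sum_j a_j alpha_j, a = Kac labels *)
Definition delta l (C : 'M[int]_l.+1) (a : 'I_l.+1 -> int) : weight l.+1 :=
  \sum_j (alpha C j) *~ a j.

Definition refl l (C : 'M[int]_l.+1) (j : 'I_l.+1) (lam : weight l.+1) :
  weight l.+1 := lam - (alpha C j) *~ pair_cor lam j.

(* the word [:: i_m; ...; i_1] acts as r_{i_m} ... r_{i_1} *)
Definition act l (C : 'M[int]_l.+1) (s : seq 'I_l.+1) (lam : weight l.+1) :
  weight l.+1 := foldr (refl C) lam s.

(* W = the group generated by the r_i acting on h^*; its elements are the maps
   act C s.  A word s is a reduced expression of w : h^* -> h^* in W. *)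
Definition reduced_expr l (C : 'M[int]_l.+1) (s : seq 'I_l.+1)
  (w : weight l.+1 -> weight l.+1) : Prop :=
  (forall lam, act C s lam = w lam) /\
  (forall t, (forall lam, act C t lam = w lam) -> size s <= size t)%N.

(* for s = [:: i_m; ...; i_1]:  <r_{i_(k-1)} ... r_{i_1} Lam, alpha_{i_k}^vee> = 1
   for all 1 <= k <= m *)
Definition minuscule_word l (C : 'M[int]_l.+1) (Lam : weight l.+1)
  (s : seq 'I_l.+1) : Prop :=
  forall k, (k < size s)%N ->
    pair_cor (act C (drop k.+1 s) Lam) (nth ord0 s k) = 1.

Definition minuscule l (C : 'M[int]_l.+1) (Lam : weight l.+1)
  (w : weight l.+1 -> weight l.+1) : Prop :=
  exists s, reduced_expr C s w /\ minuscule_word C Lam s.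

(* Since C is symmetric, roots and coroots share the coordinates of the root
   lattice, on which [(x, y) = x^T C y] is an invariant form.  As [C a = 0] with
   [a > 0], completing squares shows that the form is positive semidefinite
   with radical [Z a]; hence every real root (norm 2) is positive or negative,
   and r_j permutes the positive roots other than alpha_j.

   Existence: write [wt_of b = L0 - delta + b].  If b is a positive root of the
   finite root system (b_0 = 0) other than theta = delta - alpha_0, then
   [<b, alpha_j^vee> = -1] for some j <> 0, and r_j maps [wt_of (b + alpha_j)],
   which pairs to 1 with alpha_j^vee, to [wt_of b].  Descending in this way
   from [wt_of theta = r_0 L0] to [wt_of alpha_i] gives a L0-minuscule word.

   Reducedness: a minuscule word of length m produces m distinct positive roots
   on which the resulting weight is negative, while a word of length m makes a
   dominant weight negative on at most m positive roots.

   Uniqueness: the last reflection r_j of one minuscule word must also occur in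
   any other minuscule word with the same value; the reflections applied after
   its last occurrence there only subtract simple roots orthogonal to alpha_j,
   so they commute with r_j, and induction applies. *)

From HB Require Import structures.
From mathcomp Require Import all_boot all_order all_algebra.
From mathcomp Require Import zify ring.
Set Implicit Arguments. Unset Strict Implicit. Unset Printing Implicit Defensive.
Import Order.TTheory GRing.Theory Num.Theory.
Local Open Scope ring_scope.

Section SymmetricAffine.

Variables (l : nat) (C : 'M[int]_l.+1).
Local Notation n := l.+1.
Local Notation vec := {ffun 'I_n -> int}.
Local Notation wt := (weight n).

Hypothesis C_diag : forall i, C i i = 2.
Hypothesis C_sym : forall i j, C i j = C j i.
Hypothesis C_offdiag : forall i j, i != j -> C i j <= 0.

(** * The invariant form *)

Lemma pair_corD (u v : wt) k : pair_cor (u + v) k = pair_cor u k + pair_cor v k.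
Proof. by rewrite /pair_cor ffunE. Qed.

Lemma pair_corB (u v : wt) k : pair_cor (u - v) k = pair_cor u k - pair_cor v k.
Proof. by rewrite /pair_cor !ffunE. Qed.

Lemma pair_corMz (u : wt) z k : pair_cor (u *~ z) k = pair_cor u k * z.
Proof. by rewrite /pair_cor raddfMz ffunMzE mulrzz. Qed.

Lemma pair_cor_sum (I : Type) (r : seq I) (F : I -> wt) k :
  pair_cor (\sum_(i <- r) F i) k = \sum_(i <- r) pair_cor (F i) k.
Proof. by rewrite /pair_cor raddf_sum sum_ffunE. Qed.

Lemma pair_cor_alpha j k : pair_cor (alpha C j) k = C k j.
Proof. by rewrite /pair_cor ffunE. Qed.

Lemma pair_cor_Lambda (i k : 'I_n) : pair_cor (Lambda i) k = (k == i)%:R.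
Proof. by rewrite /pair_cor ffunE. Qed.

Lemma pair_cor_refl j mu k :
  pair_cor (refl C j mu) k = pair_cor mu k - C k j * pair_cor mu j.
Proof. by rewrite pair_corB pair_corMz pair_cor_alpha mulrC. Qed.

Definition unitv j : vec := [ffun k => (k == j)%:R].

Lemma sum_unitv (F : 'I_n -> int) j : \sum_k unitv j k * F k = F j.
Proof.
rewrite (bigD1 j) //= ffunE eqxx mul1r big1 ?addr0 // => k /negPf kj.
by rewrite ffunE kj mul0r.
Qed.

Definition cmul j (x : vec) : int := \sum_k C j k * x k.

Fact cmul_is_zmod_morphism j : zmod_morphism (cmul j).
Proof.
by move=> x y; rewrite /cmul -sumrB; apply: eq_bigr => k _; rewrite !ffunE mulrBr.
Qed.
HB.instance Definition _ j :=
  GRing.isZmodMorphism.Build vec int (cmul j) (cmul_is_zmod_morphism j).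

Lemma cmulMz j x z : cmul j (x *~ z) = cmul j x * z.
Proof. by rewrite raddfMz mulrzz. Qed.

Lemma cmul_unitv j k : cmul k (unitv j) = C k j.
Proof. by rewrite /cmul -(sum_unitv (C k) j); apply: eq_bigr => m _; rewrite mulrC. Qed.

Definition cform (x y : vec) : int := \sum_j x j * cmul j y.

Fact cform_is_zmod_morphism x : zmod_morphism (cform x).
Proof.
by move=> y z; rewrite /cform -sumrB; apply: eq_bigr => j _; rewrite raddfB mulrBr.
Qed.
HB.instance Definition _ x :=
  GRing.isZmodMorphism.Build vec int (cform x) (cform_is_zmod_morphism x).

Lemma cformE x y : cform x y = \sum_j \sum_k x j * C j k * y k.
Proof.
by apply: eq_bigr => j _; rewrite mulr_sumr; apply: eq_bigr => k _; rewrite mulrA.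
Qed.

Lemma cformC x y : cform x y = cform y x.
Proof.
rewrite !cformE exchange_big; apply: eq_bigr => j _; apply: eq_bigr => k _.
by rewrite C_sym; ring.
Qed.

Lemma cformMzr x y z : cform x (y *~ z) = cform x y * z.
Proof. by rewrite raddfMz mulrzz. Qed.

Lemma cformDl x y z : cform (x + y) z = cform x z + cform y z.
Proof. by rewrite !(cformC _ z) raddfD. Qed.

Lemma cformBl x y z : cform (x - y) z = cform x z - cform y z.
Proof. by rewrite !(cformC _ z) raddfB. Qed.

Lemma cformMzl x y z : cform (x *~ z) y = cform x y * z.
Proof. by rewrite !(cformC _ y) cformMzr. Qed.

Lemma cform_unitvl j y : cform (unitv j) y = cmul j y.
Proof. exact: sum_unitv. Qed.

Lemma cform_unitvr j y : cform y (unitv j) = cmul j y.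
Proof. by rewrite cformC cform_unitvl. Qed.

Lemma cform_unitv j : cform (unitv j) (unitv j) = 2.
Proof. by rewrite cform_unitvl cmul_unitv C_diag. Qed.

Lemma cform_add_unitv x j :
  cform (x + unitv j) (x + unitv j) = cform x x + 2 * cmul j x + 2.
Proof.
by rewrite cformDl !raddfD /= cform_unitvl cform_unitvr cform_unitv; ring.
Qed.

Definition pairing (mu : wt) (x : vec) : int := \sum_k x k * pair_cor mu k.

Fact pairing_is_zmod_morphism mu : zmod_morphism (pairing mu).
Proof.
by move=> x y; rewrite /pairing -sumrB; apply: eq_bigr => k _; rewrite !ffunE mulrBl.
Qed.
HB.instance Definition _ mu :=
  GRing.isZmodMorphism.Build vec int (pairing mu) (pairing_is_zmod_morphism mu).

Lemma pairingBl mu nu x : pairing (mu - nu) x = pairing mu x - pairing nu x.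
Proof. by rewrite /pairing -sumrB; apply: eq_bigr => k _; rewrite pair_corB mulrBr. Qed.

Lemma pairingMzl mu z x : pairing (mu *~ z) x = pairing mu x * z.
Proof.
by rewrite /pairing mulr_suml; apply: eq_bigr => k _; rewrite pair_corMz mulrA.
Qed.

Lemma pairingMzr mu x z : pairing mu (x *~ z) = pairing mu x * z.
Proof. by rewrite raddfMz mulrzz. Qed.

Lemma pairing_unitv mu j : pairing mu (unitv j) = pair_cor mu j.
Proof. exact: sum_unitv. Qed.

Lemma pairing_alpha j x : pairing (alpha C j) x = cmul j x.
Proof. by apply: eq_bigr => k _; rewrite pair_cor_alpha C_sym mulrC. Qed.

(* r_j on the root lattice, in the basis of simple roots *)
Definition rrefl j (x : vec) : vec := x - unitv j *~ cmul j x.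

Lemma rrefl_neq j x k : k != j -> rrefl j x k = x k.
Proof. by move=> /negPf kj; rewrite !(ffunE, ffunMzE) kj mul0rz subr0. Qed.

Lemma rreflK j : involutive (rrefl j).
Proof.
move=> x; apply/ffunP => k.
by rewrite /rrefl raddfB /= cmulMz cmul_unitv C_diag !(ffunE, ffunMzE) !mulrzz; ring.
Qed.

Lemma pairing_refl j mu x : pairing (refl C j mu) (rrefl j x) = pairing mu x.
Proof.
rewrite /refl /rrefl pairingBl pairingMzl !raddfB /= !pairingMzr pairing_unitv.
by rewrite !pairing_alpha cmul_unitv C_diag; ring.
Qed.

Lemma cform_rrefl j x : cform (rrefl j x) (rrefl j x) = cform x x.
Proof.
rewrite /rrefl cformBl cformMzl !raddfB /= !cformMzr cform_unitvl cform_unitvr.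
by rewrite cform_unitv; ring.
Qed.

(** * Minuscule words *)

Lemma act_cat s1 s2 mu : act C (s1 ++ s2) mu = act C s1 (act C s2 mu).
Proof. exact: foldr_cat. Qed.

Lemma reflK j : involutive (refl C j).
Proof.
move=> mu; rewrite {1}/refl pair_cor_refl C_diag /refl -addrA -opprD -mulrzDr.
have -> : pair_cor mu j + (pair_cor mu j - 2 * pair_cor mu j) = 0 by ring.
by rewrite mulr0z subr0.
Qed.

Lemma refl_comm j k mu : C j k = 0 ->
  refl C j (refl C k mu) = refl C k (refl C j mu).
Proof.
move=> Cjk; have Ckj : C k j = 0 by rewrite C_sym.
rewrite {1}/refl pair_cor_refl Cjk mul0r subr0 [RHS]/refl pair_cor_refl Ckj mul0r subr0.
by rewrite /refl -!addrA [X in _ + X = _]addrC.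
Qed.

Lemma act_refl_comm t j mu : {in t, forall k, C j k = 0} ->
  act C t (refl C j mu) = refl C j (act C t mu).
Proof.
elim: t => [|k t IH] //= Ct0.
rewrite IH => [|x xt]; last by apply: Ct0; rewrite inE xt orbT.
by rewrite refl_comm // C_sym Ct0 ?mem_head.
Qed.

Fixpoint mword (mu : wt) (s : seq 'I_n) : Prop :=
  if s is k :: s' then mword mu s' /\ pair_cor (act C s' mu) k = 1 else True.

Lemma minuscule_wordE Lam s : minuscule_word C Lam s <-> mword Lam s.
Proof.
elim: s => [|k s IH] /=; first by split => // _ [].
rewrite -IH; split => [Hs | [Hs Hk] [|m] //=].
  by split => [m ms|]; [exact: (Hs m.+1) | have := Hs 0%N isT; rewrite /= drop0].
by rewrite drop0.
exact: Hs.
Qed.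

Lemma mword_cat mu s1 s2 :
  mword mu (s1 ++ s2) <-> mword mu s2 /\ mword (act C s2 mu) s1.
Proof. elim: s1 => [|k s1 IH] /=; [tauto | rewrite IH act_cat; tauto]. Qed.

Lemma mword_refl_comm t j mu : {in t, forall k, C j k = 0} ->
  mword (refl C j mu) t <-> mword mu t.
Proof.
elim: t => [|k t IH] //= Ct0.
have Ct0' : {in t, forall x, C j x = 0} by move=> x xt; apply: Ct0; rewrite inE xt orbT.
rewrite IH // act_refl_comm // pair_cor_refl -C_sym Ct0 ?mem_head //.
by rewrite mul0r subr0.
Qed.

Lemma act_mword mu t : mword mu t -> act C t mu = mu - \sum_(k <- t) alpha C k.
Proof.
elim: t => [|k t IH] /= => [_|[/IH -> Hk]]; first by rewrite big_nil subr0.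
by rewrite /refl Hk mulr1z big_cons opprD addrA addrAC.
Qed.

Lemma pair_cor_act_mword mu t k : mword mu t ->
  pair_cor (act C t mu) k = pair_cor mu k - \sum_(i <- t) C k i.
Proof.
move=> /act_mword ->; rewrite pair_corB pair_cor_sum.
by under eq_bigr do rewrite pair_cor_alpha.
Qed.

Lemma sum_offdiag_le0 j t : j \notin t -> \sum_(k <- t) C j k <= 0.
Proof.
move=> jt; rewrite big_seq; apply: sumr_le0 => k kt.
by apply: C_offdiag; apply: contraNneq jt => ->.
Qed.

Lemma sum_offdiag_eq0 j t : j \notin t -> \sum_(k <- t) C j k = 0 ->
  {in t, forall k, C j k = 0}.
Proof.
move=> jt /eqP; rewrite -oppr_eq0 -sumrN big_seq psumr_eq0 => [/allP Ht k kt|k kt].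
  by apply/eqP; rewrite -oppr_eq0; move/implyP: (Ht k kt); apply.
by rewrite oppr_ge0; apply: C_offdiag; apply: contraNneq jt => ->.
Qed.

(** * Positivity of the form *)

Variable a : 'I_n -> int.
Hypothesis a_gt0 : forall j, 0 < a j.
Hypothesis a_null : forall k, \sum_j C k j * a j = 0.

Definition avec : vec := [ffun k => a k].

Lemma cform_avecr x : cform x avec = 0.
Proof.
rewrite /cform big1 // => j _; suff -> : cmul j avec = 0 by rewrite mulr0.
by rewrite -(a_null j); apply: eq_bigr => k _; rewrite ffunE.
Qed.

Lemma cform_avecl x : cform avec x = 0.
Proof. by rewrite cformC cform_avecr. Qed.

Definition ratio (x : vec) k : rat := (x k)%:Q / (a k)%:Q.

Lemma intr_a_neq0 k : (a k)%:Q != 0.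
Proof. by rewrite intr_eq0 gt_eqF ?a_gt0. Qed.

Lemma ratioK (x : vec) k : (a k)%:Q * ratio x k = (x k)%:Q.
Proof. by rewrite mulrC divfK ?intr_a_neq0. Qed.

Definition cform_term (x : vec) j k : rat :=
  - ((C j k)%:Q * (a j)%:Q * (a k)%:Q * (ratio x j - ratio x k) ^+ 2).

(* Completing squares with the null vector [a]:
   [2 x^T C x = - sum_(j,k) C_jk a_j a_k (x_j / a_j - x_k / a_k)^2]. *)
Lemma cform_sum_squares x :
  (cform x x)%:Q *+ 2 = \sum_j \sum_k cform_term x j k.
Proof.
have null j (c : rat) : \sum_k c * ((C j k)%:Q * (a k)%:Q) = 0.
  rewrite -mulr_sumr (eq_bigr (fun k => (C j k * a k)%:Q)) => [|k _].
    by rewrite -rmorph_sum a_null mulr0.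
  by rewrite intrM.
have -> : \sum_j \sum_k cform_term x j k = \sum_j
    (\sum_k ((x j)%:Q * (C j k)%:Q * (x k)%:Q) *+ 2
     - \sum_k ((a j)%:Q * ratio x j ^+ 2) * ((C j k)%:Q * (a k)%:Q)
     - \sum_k ((a k)%:Q * ratio x k ^+ 2) * ((C k j)%:Q * (a j)%:Q)).
  apply: eq_bigr => j _; rewrite -!sumrB; apply: eq_bigr => k _.
  by rewrite /cform_term -!ratioK [C k j]C_sym; ring.
rewrite !sumrB [X in _ - X]exchange_big /=.
rewrite [X in _ - X - _]big1 => [|j _]; last exact: null.
rewrite [X in _ - X]big1 => [|k _]; last exact: null.
rewrite !subr0 cformE rmorph_sum -sumrMnl; apply: eq_bigr => j _.
by rewrite rmorph_sum -sumrMnl; apply: eq_bigr => k _; rewrite !rmorphM.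
Qed.

Lemma cform_term_ge0 x j k : 0 <= cform_term x j k.
Proof.
rewrite /cform_term oppr_ge0.
have [->|njk] := eqVneq j k; first by rewrite subrr expr0n mulr0.
apply: mulr_le0_ge0; last exact: sqr_ge0.
do 2!(apply: mulr_le0_ge0; last by rewrite ler0z ltW).
by rewrite lerz0 C_offdiag.
Qed.

Lemma cform_ge0 x : 0 <= cform x x.
Proof.
rewrite -(ler0z rat) -(pmulrn_lge0 _ (isT : (0 < 2)%N)) cform_sum_squares.
by do 2!apply: sumr_ge0 => ? _; apply: cform_term_ge0.
Qed.

Hypothesis C_indecomposable : indecomposable C.

Lemma cform_eq0 x : cform x x = 0 -> forall j k, x j * a k = x k * a j.
Proof.
move=> x0.
have term0 j k : cform_term x j k = 0.
  have sum0 : \sum_j \sum_k cform_term x j k = 0.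
    by rewrite -cform_sum_squares x0 mul0rn.
  have row_ge0 j' : 0 <= \sum_k cform_term x j' k.
    by apply: sumr_ge0 => k' _; apply: cform_term_ge0.
  have row0 := psumr_eq0P (fun j' _ => row_ge0 j') sum0 (i := j) isT.
  exact: (psumr_eq0P (fun k' _ => cform_term_ge0 x j k') row0).
have ratio_eq j k : C j k != 0 -> ratio x j = ratio x k.
  move=> Cjk; have /eqP := term0 j k; rewrite oppr_eq0 !mulf_eq0 !intr_eq0.
  by rewrite (negPf Cjk) !(gt_eqF (a_gt0 _)) /= orbb subr_eq0 => /eqP.
pose J := [set k | ratio x k == ratio x ord0].
have JT : J = setT.
  apply/eqP; apply: contraT => JnT.
  have [|j [k [+ + Cjk]]] := C_indecomposable (J := J) _ JnT.
    by apply/set0Pn; exists ord0; rewrite inE.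
  by rewrite !inE => /eqP <-; rewrite (ratio_eq _ _ Cjk) eqxx.
have ratio_const k : ratio x k = ratio x ord0.
  by have := in_setT k; rewrite -JT inE => /eqP.
move=> j k; apply: (@intr_inj rat); rewrite !intrM -!ratioK !ratio_const; ring.
Qed.

Lemma cform_even x : cform x x =
  2 * (\sum_j x j ^+ 2 + \sum_(j : 'I_n) \sum_(k : 'I_n | (k < j)%N) x j * C j k * x k).
Proof.
pose g (j k : 'I_n) := if (k < j)%N then x j * C j k * x k else 0.
have split_term (j k : 'I_n) :
    x j * C j k * x k = g j k + unitv j k * (x j * C j j * x j) + g k j.
  rewrite /g ffunE -val_eqE /=; case: ltngtP => [_|_|/val_inj ->];
    by rewrite ?mul0r ?mul1r ?addr0 ?add0r // C_sym; ring.
rewrite cformE (eq_bigr _ (fun j _ => eq_bigr _ (fun k _ => split_term j k))).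
under eq_bigr do rewrite !big_split /= sum_unitv C_diag.
rewrite !big_split /= [X in _ + _ + X]exchange_big /=.
rewrite -!(eq_bigr _ (fun j _ => big_mkcond _ _)).
rewrite [X in _ + X + _](eq_bigr (fun j => x j ^+ 2 * 2)) => [|j _]; last by ring.
rewrite -mulr_suml; ring.
Qed.

Lemma cform_ge2 (y : vec) : (forall k, 0 <= y k) -> (exists k, y k != 0) ->
  (exists k, y k = 0) -> 2 <= cform y y.
Proof.
move=> y_ge0 [j yj] [k yk].
have cform_neq0 : cform y y != 0.
  apply: contra yj => /eqP/cform_eq0/(_ j k); rewrite yk mul0r => /eqP.
  by rewrite mulf_eq0 (gt_eqF (a_gt0 k)) orbF.
have [z yz] : exists z, cform y y = 2 * z by eexists; exact: cform_even.
by move: (cform_ge0 y) cform_neq0; rewrite yz; lia.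
Qed.

Lemma cform_disjoint_le0 (p m : vec) : (forall k, 0 <= p k) ->
  (forall k, 0 <= m k) -> (forall k, p k * m k = 0) -> cform p m <= 0.
Proof.
move=> p_ge0 m_ge0 pm0; rewrite cformE.
apply: sumr_le0 => j _; apply: sumr_le0 => k _.
have [->|jk] := eqVneq j k; first by rewrite mulrAC pm0 mul0r.
by rewrite -mulrA; apply: mulr_ge0_le0 => //; apply: mulr_le0_ge0 => //; apply: C_offdiag.
Qed.

Lemma cform2_sign x : cform x x = 2 -> (forall k, 0 <= x k) \/ (forall k, x k <= 0).
Proof.
move=> x2.
case: (boolP [forall k, 0 <= x k]) => [/forallP|]; first by left.
case: (boolP [forall k, x k <= 0]) => [/forallP|]; first by right.
rewrite !negb_forall => /existsP [k1 xk1] /existsP [k2 xk2]; exfalso.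
move: xk1 xk2; rewrite -!ltNge => xk1 xk2.
pose p : vec := [ffun k => if 0 <= x k then x k else 0].
pose m : vec := [ffun k => if 0 <= x k then 0 else - x k].
have parts k : [/\ x k = (p - m) k, p k * m k = 0, 0 <= p k & 0 <= m k].
  rewrite !ffunE; case: leP => x_k; split => //.
  - by rewrite subr0.
  - by rewrite mulr0.
  - by rewrite sub0r opprK.
  - by rewrite mul0r.
  - by rewrite oppr_ge0 ltW.
have xE : x = p - m by apply/ffunP => k; case: (parts k).
have p2 : 2 <= cform p p.
  apply: cform_ge2 => [k||]; first by case: (parts k).
  - by exists k1; rewrite ffunE (ltW xk1) gt_eqF.
  - by exists k2; rewrite ffunE leNgt xk2.
have m2 : 2 <= cform m m.
  apply: cform_ge2 => [k||]; first by case: (parts k).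
  - by exists k2; rewrite ffunE leNgt xk2 /= oppr_eq0 lt_eqF.
  - by exists k1; rewrite ffunE (ltW xk1).
have pm : cform p m <= 0.
  by apply: cform_disjoint_le0 => k; case: (parts k).
move: x2; rewrite xE cformBl !raddfB /= (cformC m p); lia.
Qed.

(** * Positive roots and reduced words *)

Definition pos_root (b : vec) := cform b b = 2 /\ forall k, 0 <= b k.

Lemma pos_root_unitv j : pos_root (unitv j).
Proof. by split => [|k]; [exact: cform_unitv | rewrite ffunE ler0n]. Qed.

Lemma cform_single (x : vec) j : (forall k, k != j -> x k = 0) ->
  cform x x = 2 * x j ^+ 2.
Proof.
move=> x0; rewrite /cform (bigD1 j) //= big1 ?addr0 => [|k /x0 ->]; last by rewrite mul0r.
rewrite /cmul (bigD1 j) //= big1 ?addr0 => [|k /x0 ->]; last by rewrite mulr0.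
by rewrite C_diag; ring.
Qed.

Lemma rrefl_pos_root j b : pos_root b -> b != unitv j -> pos_root (rrefl j b).
Proof.
move=> [b2 b_ge0] b_neq.
have rb2 : cform (rrefl j b) (rrefl j b) = 2 by rewrite cform_rrefl.
have [rb_ge0|rb_le0] := cform2_sign rb2; first by [].
suff b_supp k : k != j -> b k = 0.
  have := cform_single b_supp; rewrite b2 => bj2.
  have bj1 : b j = 1 by have := b_ge0 j; nia.
  case/eqP: b_neq; apply/ffunP => k; rewrite ffunE.
  by have [->|/b_supp ->] := eqVneq k j; rewrite ?bj1.
by move=> kj; apply/eqP; rewrite eq_le b_ge0 andbT -(rrefl_neq b kj) rb_le0.
Qed.

Lemma rrefl_neq_unitv j b : pos_root b -> rrefl j b != unitv j.
Proof.
move=> [_ b_ge0]; apply/eqP => rb; have := b_ge0 j.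
by rewrite -(rreflK j b) rb /rrefl !(ffunE, ffunMzE) cmul_unitv C_diag eqxx.
Qed.

Definition dominant (Lam : wt) := forall k, 0 <= pair_cor Lam k.

Definition inverted_roots (mu : wt) (L : seq vec) :=
  uniq L /\ {in L, forall b, pos_root b /\ pairing mu b < 0}.

Lemma pairing_ge0 Lam (x : vec) : dominant Lam -> (forall k, 0 <= x k) ->
  0 <= pairing Lam x.
Proof. by move=> Lam_ge0 x_ge0; apply: sumr_ge0 => k _; apply: mulr_ge0. Qed.

Lemma inverted_roots_size Lam t L : dominant Lam ->
  inverted_roots (act C t Lam) L -> (size L <= size t)%N.
Proof.
move=> Lam_dom; elim: t L => [|j t IH] L /= [uL invL].
  case: L invL {uL} => // b L /(_ b (mem_head _ _)) [[_ b_ge0]].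
  by rewrite ltNge pairing_ge0.
pose L' := map (rrefl j) (filter (predC1 (unitv j)) L).
have /IH : inverted_roots (act C t Lam) L'.
  split; first by rewrite map_inj_uniq ?filter_uniq //; apply: can_inj (rreflK j).
  move=> b' /mapP [b]; rewrite mem_filter => /andP [b_neq bL] ->.
  have [b_pos b_neg] := invL b bL.
  by split; [exact: rrefl_pos_root | rewrite -(pairing_refl j) rreflK].
rewrite size_map size_filter => IH_size.
have := count_predC (predC1 (unitv j)) L.
have -> : count (predC (predC1 (unitv j))) L = count_mem (unitv j) L.
  by apply: eq_count => x /=; rewrite negbK.
have : (count_mem (unitv j) L <= 1)%N by rewrite count_uniq_mem // leq_b1.
move: IH_size; move: (count _ L) (count_mem _ L) => c1 c2 c1_le c2_le <-.
by rewrite -addn1 leq_add.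
Qed.

Lemma mword_inverted_roots mu s : mword mu s ->
  exists2 L, size L = size s & inverted_roots (act C s mu) L.
Proof.
elim: s => [|j s IH] /= => [_|[/IH [L sizeL [uL invL]] sj1]]; first by exists [::].
exists (unitv j :: map (rrefl j) L); first by rewrite /= size_map sizeL.
split.
  rewrite /= map_inj_uniq ?uL ?andbT; last exact: can_inj (rreflK j).
  apply/mapP => -[b bL /esym/eqP]; apply/negP.
  exact: rrefl_neq_unitv (invL b bL).1.
move=> b; rewrite inE => /predU1P [->|/mapP [b' b'L ->]].
  split; first exact: pos_root_unitv.
  by rewrite pairing_unitv pair_cor_refl sj1 C_diag.
have [b'_pos b'_neg] := invL b' b'L; split; last by rewrite pairing_refl.
apply: rrefl_pos_root => //; apply: contraTneq b'_neg => ->.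
by rewrite pairing_unitv sj1.
Qed.

Lemma mword_reduced Lam s : dominant Lam -> mword Lam s ->
  reduced_expr C s (act C s).
Proof.
move=> Lam_dom /mword_inverted_roots [L sizeL invL]; split=> // t act_t.
by rewrite -sizeL; apply: (inverted_roots_size Lam_dom); rewrite act_t.
Qed.

Lemma mword_exchange Lam j s t : dominant Lam ->
  mword Lam (j :: s) -> mword Lam t -> act C (j :: s) Lam = act C t Lam ->
  exists t', [/\ mword Lam t', act C s Lam = act C t' Lam &
                 act C t =1 act C (j :: t')].
Proof.
move=> Lam_dom [mw_s sj1] mw_t st.
have tj : pair_cor (act C t Lam) j = -1 by rewrite -st /= pair_cor_refl sj1 C_diag.
have j_t : j \in t.
  apply/negPn/negP => j_t; have := sum_offdiag_le0 j_t; have := Lam_dom j.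
  move: tj; rewrite pair_cor_act_mword //.
  by move: (\sum_(i <- t) C j i) (pair_cor Lam j) => S p; lia.
have [t1 [t2 [tE j_t1]]] : exists t1 t2, t = t1 ++ j :: t2 /\ j \notin t1.
  exists (take (index j t) t), (drop (index j t).+1 t); split.
    by rewrite -{1}(cat_take_drop (index j t) t) (drop_nth j) ?index_mem ?nth_index.
  by apply/negP => /index_ltn; rewrite ltnn.
subst t; move: mw_t tj st => /mword_cat [/= [mw_t2 t2j] mw_t1].
rewrite act_cat /= => tj st.
have t1_comm : {in t1, forall k, C j k = 0}.
  apply: sum_offdiag_eq0 => //; move: tj.
  rewrite pair_cor_act_mword // pair_cor_refl t2j C_diag.
  by move: (\sum_(i <- t1) C j i) => S; lia.
have act_t lam : act C (t1 ++ j :: t2) lam = act C (j :: t1 ++ t2) lam.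
  by rewrite /= !act_cat /= act_refl_comm.
exists (t1 ++ t2); split => //.
  by apply/mword_cat; split => //; rewrite -(mword_refl_comm _ t1_comm).
apply: (can_inj (reflK j)).
by rewrite [LHS]st -[RHS]/(act C (j :: t1 ++ t2) Lam) -act_t act_cat.
Qed.

Lemma mword_act_uniq Lam s t : dominant Lam -> mword Lam s -> mword Lam t ->
  act C s Lam = act C t Lam -> act C s =1 act C t.
Proof.
move=> Lam_dom; elim: s t => [|j s IH] t mw_s mw_t st.
  have [L sizeL invL] := mword_inverted_roots mw_t.
  have := inverted_roots_size (t := [::]) Lam_dom; rewrite st => /(_ L invL).
  by rewrite sizeL; case: t {mw_t st sizeL invL}.
have [t' [mw_t' st' tE]] := mword_exchange Lam_dom mw_s mw_t st.
by move=> lam; rewrite tE /= (IH t') //; case: mw_s.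
Qed.

(** * Descending from the highest root *)

Hypothesis a0 : a ord0 = 1.
Local Notation L0 := (Lambda (@ord0 l)).

Definition theta : vec := avec - unitv ord0.
Definition wt_of (b : vec) : wt := L0 - delta C a + \sum_j alpha C j *~ b j.

Lemma pair_cor_delta k : pair_cor (delta C a) k = 0.
Proof.
rewrite pair_cor_sum -[RHS](a_null k); apply: eq_bigr => j _.
by rewrite pair_corMz pair_cor_alpha.
Qed.

Lemma pair_cor_wt_of b k : pair_cor (wt_of b) k = (k == ord0)%:R + cmul k b.
Proof.
rewrite pair_corD pair_corB pair_cor_delta pair_cor_Lambda subr0 pair_cor_sum.
by congr (_ + _); apply: eq_bigr => j _; rewrite pair_corMz pair_cor_alpha.
Qed.

Lemma sum_alpha_unitv j : \sum_k alpha C k *~ unitv j k = alpha C j.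
Proof.
rewrite (bigD1 j) //= big1 => [|k /negPf kj]; first by rewrite ffunE eqxx mulr1z addr0.
by rewrite ffunE kj mulr0z.
Qed.

Lemma wt_of_addv b j : wt_of (b + unitv j) = wt_of b + alpha C j.
Proof.
rewrite /wt_of -!addrA -sum_alpha_unitv -big_split /=; congr (_ + (_ + _)).
by apply: eq_bigr => k _; rewrite ffunE mulrzDr.
Qed.

Lemma wt_of_unitv j : wt_of (unitv j) = L0 - delta C a + alpha C j.
Proof. by rewrite /wt_of sum_alpha_unitv. Qed.

Lemma wt_of_theta : wt_of theta = refl C ord0 L0.
Proof.
rewrite /refl pair_cor_Lambda eqxx mulr1z /wt_of.
have -> : \sum_j alpha C j *~ theta j = delta C a - alpha C ord0.
  rewrite -sum_alpha_unitv -sumrB; apply: eq_bigr => j _.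
  by rewrite -mulrzBr /theta !ffunE.
by rewrite addrA subrK.
Qed.

Lemma root_le_avec b : cform b b = 2 -> b ord0 = 0 -> forall k, b k <= a k.
Proof.
move=> b2 b0 k.
have ab2 : cform (avec - b) (avec - b) = 2.
  by rewrite cformBl !raddfB /= !cform_avecl cform_avecr b2; ring.
have [/(_ k)|/(_ ord0)] := cform2_sign ab2; rewrite !ffunE ?subr_ge0 //.
by rewrite b0 a0.
Qed.

Lemma cmul_root_ge b j : pos_root b -> b ord0 = 0 -> b != theta ->
  -1 <= cmul j b.
Proof.
move=> [b2 b_ge0] b0 b_neq.
have := cform_ge0 (b + unitv j); rewrite cform_add_unitv b2 => ge0.
have [//|cmul_eq] : -1 <= cmul j b \/ cmul j b = -2 by lia.
have iso : cform (b + unitv j) (b + unitv j) = 0 by rewrite cform_add_unitv b2 cmul_eq.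
have prop k : (b + unitv j) k = (j == ord0)%:R * a k.
  by have := cform_eq0 iso k ord0; rewrite a0 mulr1 => ->; rewrite !ffunE b0 add0r eq_sym.
have [j0|jn0] := eqVneq j ord0.
  case/eqP: b_neq; apply/ffunP => k.
  by move: (prop k); rewrite j0 eqxx mul1r !ffunE => <-; ring.
by move: (prop j) (b_ge0 j); rewrite (negPf jn0) mul0r !ffunE eqxx /=; lia.
Qed.

Lemma theta_sub_ge0 b : pos_root b -> b ord0 = 0 -> forall k, 0 <= (theta - b) k.
Proof.
move=> [b2 _] b0 k; rewrite !ffunE.
have [->|kn0] := eqVneq k ord0; first by rewrite a0 b0 subrr.
by rewrite subr0 subr_ge0 root_le_avec.
Qed.

(* [b + alpha_j] is then again a positive root *)
Lemma exists_cmul_Nm1 b : pos_root b -> b ord0 = 0 -> b != theta ->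
  exists2 j, j != ord0 & cmul j b = -1.
Proof.
move=> b_pos b0 b_neq; pose g := theta - b.
have g_ge0 := theta_sub_ge0 b_pos b0.
have g0 : g ord0 = 0 by rewrite !ffunE eqxx a0 b0 subrr.
have gb : cform g b <= -1.
  rewrite cformBl cformBl cform_avecl cform_unitvl b_pos.1.
  by have := cmul_root_ge ord0 b_pos b0 b_neq; lia.
have [k gk] : exists k, g k * cmul k b < 0.
  apply/existsP; apply: contraTT gb; rewrite negb_exists -ltNge => /forallP gb_ge0.
  by apply: (@lt_le_trans _ _ 0) => //; apply: sumr_ge0 => k _; rewrite leNgt gb_ge0.
have gk_gt0 : 0 < g k.
  by rewrite lt_neqAle g_ge0 andbT; apply: contraTneq gk => <-; rewrite mul0r.
exists k; first by apply: contraTneq gk_gt0 => ->; rewrite g0.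
by have := cmul_root_ge k b_pos b0 b_neq; move: gk; rewrite pmulr_rlt0 //; lia.
Qed.

Lemma refl_wt_of_addv b j : j != ord0 -> cmul j b = -1 ->
  pair_cor (wt_of (b + unitv j)) j = 1 /\ refl C j (wt_of (b + unitv j)) = wt_of b.
Proof.
move=> /negPf jn0 bj; rewrite pair_cor_wt_of jn0 add0r raddfD /= cmul_unitv C_diag bj.
rewrite /refl pair_cor_wt_of jn0 add0r raddfD /= cmul_unitv C_diag bj.
by rewrite wt_of_addv mulr1z addrK.
Qed.

Lemma mword_from_theta b : pos_root b -> b ord0 = 0 ->
  exists u, mword (wt_of theta) u /\ act C u (wt_of theta) = wt_of b.
Proof.
have [N bN] : exists N : nat, \sum_k (a k - b k) <= N%:Z.
  by exists (absz (\sum_k (a k - b k))); rewrite abszE ler_norm.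
elim: N b bN => [|N IH] b bN b_pos b0.
  suff : 0 < \sum_k (a k - b k) by lia.
  rewrite (bigD1 ord0) //= a0 b0 subr0 ltr_pwDl ?sumr_ge0 // => k _.
  by rewrite subr_ge0 root_le_avec //; case: b_pos.
have [->|b_neq] := eqVneq b theta; first by exists [::].
have [j jn0 bj] := exists_cmul_Nm1 b_pos b0 b_neq.
have [pj reflj] := refl_wt_of_addv jn0 bj.
have [|||u [mw_u act_u]] := IH (b + unitv j).
- have -> : \sum_k (a k - (b + unitv j) k) = \sum_k (a k - b k) - 1.
    rewrite (eq_bigr (fun k => (a k - b k) - unitv j k * 1)) => [|k _]; last first.
      by rewrite !ffunE; ring.
    by rewrite sumrB sum_unitv.
  by move: bN; rewrite -[N.+1]addn1 PoszD; lia.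
- split => [|k]; first by rewrite cform_add_unitv b_pos.1 bj.
  by rewrite !ffunE addr_ge0 ?b_pos.2.
- by rewrite !ffunE b0 add0r eq_sym (negPf jn0).
by exists (j :: u); rewrite /= act_u.
Qed.

End SymmetricAffine.
Theorem lemma5p22 (l : nat) (C : 'M[int]_l.+1) (a : 'I_l.+1 -> int)
  (HC : affine_type C) (Hsym : C^T = C)
  (Ha_pos : forall j, 0 < a j)
  (Ha_null : forall k, \sum_j C k j * a j = 0)
  (Ha0 : a ord0 = 1)
  (i : 'I_l.+1) (Hi : i != ord0) :
  exists w : seq 'I_l.+1,
    [/\ minuscule C (Lambda ord0) (act C w),
        act C w (Lambda ord0) = Lambda ord0 - delta C a + alpha C i &
        forall w' : seq 'I_l.+1,
          minuscule C (Lambda ord0) (act C w') ->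
          act C w' (Lambda ord0) = Lambda ord0 - delta C a + alpha C i ->
          forall lam, act C w' lam = act C w lam].
Proof.
case: HC => [[C_diag C_offdiag _] C_ind _ _ _].
have C_sym p q : C p q = C q p by rewrite -{1}Hsym mxE.
have L0_dom : dominant (Lambda (@ord0 l)) by move=> k; rewrite pair_cor_Lambda ler0n.
have i0 : unitv i ord0 = 0 by rewrite ffunE eq_sym (negPf Hi).
have [u [mw_u act_u]] := mword_from_theta C_diag C_sym C_offdiag Ha_pos Ha_null C_ind
  Ha0 (pos_root_unitv C_diag i) i0.
pose w := u ++ [:: ord0].
have mw_w : mword C (Lambda ord0) w.
  apply/mword_cat; split; first by rewrite /= pair_cor_Lambda eqxx.
  by rewrite /= -(wt_of_theta C a).
have act_w : act C w (Lambda ord0) = Lambda ord0 - delta C a + alpha C i.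
  by rewrite act_cat /= -(wt_of_theta C a) act_u wt_of_unitv.
exists w; split => //.
  exists w; split; last exact/minuscule_wordE.
  exact: (mword_reduced C_diag C_sym C_offdiag Ha_pos Ha_null C_ind L0_dom).
move=> w' [s' [[act_s' _] /minuscule_wordE mw_s']] act_w' lam.
rewrite -act_s'.
apply: (mword_act_uniq C_diag C_sym C_offdiag Ha_pos Ha_null C_ind L0_dom) => //.
by rewrite act_s' act_w' act_w.
Qed.
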